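(* Let $A,B\in\mathrm{SL}_2\mathbb{R}$ be noncommuting, coherently oriented, both hyperbolic, and assume their translation axes intersect. If $[a]\le[b]$, then $b$ is an optimal word, and so is $a$ provided $[a]=[b]$. There are no other optimal words.
   Context: Setting: $A,B$ have trace $\ge2$; hyperbolic means trace $>2$, with attracting/repelling fixed points $\alpha^\pm$ (for $A$), $\beta^\pm$ (for $B$) in $\partial\mathcal{H}=\mathbb{P}^1\mathbb{R}$; the translation axis is the hyperbolic geodesic joining the two fixed points. Coherent orientation: with $\partial\mathcal{H}$ cyclically ordered and $[\alpha,\beta]$ the closed counterclockwise interval from $\alpha$ to $\beta$, let $I^+=\{\alpha^+\}$ if $\alpha^+=\beta^+$, and otherwise the one of $[\alpha^+,\beta^+],[\beta^+,\alpha^+]$ mapped into itself by both $A$ and $B$ (if it exists); define $I^-$ likewise with $A^{-1},B^{-1},\alpha^-,\beta^-$; the pair is coherently oriented if both exist. Words: $F_2^+$ is the free semigroup of nonempty words over $\{a,b\}$, $|w|$ the length, $\phi$ the homomorphism with $\phi(a)=A,\phi(b)=B$, and $[w]=\mathrm{tr}(\phi(w))$. Define $w\preceq u$ iff $[w^{|u|}]\le[u^{|w|}]$; $w$ is maximal if $u\preceq w$ for all $u\in F_2^+$. A Lyndon word is one strictly smaller in the lexicographic order (with $a<b$) than each of its proper rotations. A complete set of optimal words is a subset $\{v_1,v_2,\dots\}\subseteq F_2^+$ of pairwise distinct maximal Lyndon words such that every maximal word is a power of a rotation of some $v_i$; such a set is unique if it exists, and a word is optimal if it belongs to it. *)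

From HB Require Import structures.
From mathcomp Require Import all_boot all_order all_algebra.
From mathcomp Require Import reals.
Set Implicit Arguments. Unset Strict Implicit. Unset Printing Implicit Defensive.
Import Order.TTheory GRing.Theory Num.Theory.
Local Open Scope ring_scope.

Section Defs.
Variable R : realType.

(* Some x = the real point x, None = ∞. *)
Definition P1 := option R.

Definition vec_of (p : P1) : 'cV[R]_2 :=
  match p with
  | Some x => \col_(i < 2) [:: x; 1]`_i
  | None => \col_(i < 2) [:: 1; 0]`_i
  end.

Definition point_of (v : 'cV[R]_2) : P1 :=
  if v (@ord_max 1) 0 != 0 then Some (v (@ord0 1) 0 / v (@ord_max 1) 0) else None.

Definition act (M : 'M[R]_2) (p : P1) : P1 := point_of (M *m vec_of p).

Definition attracting (M : 'M[R]_2) (p : P1) : Prop :=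
  exists (v : 'cV[R]_2) (l : R), [/\ v != 0, M *m v = l *: v, 1 < `|l| & p = point_of v].
Definition repelling (M : 'M[R]_2) (p : P1) : Prop :=
  exists (v : 'cV[R]_2) (l : R), [/\ v != 0, M *m v = l *: v, `|l| < 1 & p = point_of v].

Definition hyperbolic (M : 'M[R]_2) : Prop := 2 < \tr M.

(* ---------- cyclic order on P^1 (counterclockwise = increasing on R, then ∞) *)
Definition ple (x y : P1) : bool :=
  match x, y with
  | _, None => true
  | None, Some _ => false
  | Some x, Some y => x <= y
  end.

(* x lies in the closed counterclockwise interval [a, b] *)
Definition ccw_in (a b x : P1) : bool :=
  if ple a b then ple a x && ple x b else ple a x || ple x b.

Definition maps_into_itself (M : 'M[R]_2) (a b : P1) : Prop :=
  forall x, ccw_in a b x -> ccw_in a b (act M x).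

Definition Iexists (M N : 'M[R]_2) (p q : P1) : Prop :=
  p = q \/
  (maps_into_itself M p q /\ maps_into_itself N p q) \/
  (maps_into_itself M q p /\ maps_into_itself N q p).

Definition coherently_oriented (A B : 'M[R]_2) (ap am bp bm : P1) : Prop :=
  Iexists A B ap bp /\ Iexists (invmx A) (invmx B) am bm.

Definition geodesic (p q : P1) (z : R * R) : Prop :=
  0 < z.2 /\
  match p, q with
  | Some p, Some q => (z.1 - (p + q) / 2) ^+ 2 + z.2 ^+ 2 = ((p - q) / 2) ^+ 2
  | Some p, None => z.1 = p
  | None, Some q => z.1 = q
  | None, None => False
  end.

Definition axes_intersect (ap am bp bm : P1) : Prop :=
  exists z, geodesic ap am z /\ geodesic bp bm z.

(* ---------- words over {a, b}: a = false, b = true, with a < b ---------- *)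
Definition word := seq bool.

Definition phi (A B : 'M[R]_2) (w : word) : 'M[R]_2 :=
  foldr (fun c M => (if c then B else A) *m M) 1%:M w.

Definition wtr (A B : 'M[R]_2) (w : word) : R := \tr (phi A B w).

Definition wpow (n : nat) (w : word) : word := flatten (nseq n w).

Definition wle (A B : 'M[R]_2) (w u : word) : Prop :=
  wtr A B (wpow (size u) w) <= wtr A B (wpow (size w) u).

Definition maximal (A B : 'M[R]_2) (w : word) : Prop :=
  w != [::] /\ forall u : word, u != [::] -> wle A B u w.

End Defs.

Fixpoint lexlt (u v : word) : bool :=
  match u, v with
  | [::], [::] => false
  | [::], _ :: _ => true
  | _ :: _, [::] => false
  | x :: u', y :: v' => (~~ x && y) || ((x == y) && lexlt u' v')
  end.

Definition lyndon (w : word) : Prop :=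
  w != [::] /\ forall k, (0 < k < size w)%N -> lexlt w (rot k w).

Section Optimal.
Variable R : realType.

Definition complete_optimal (A B : 'M[R]_2) (V : word -> Prop) : Prop :=
  (forall v, V v -> maximal A B v /\ lyndon v) /\
  (forall w, maximal A B w ->
     exists v, V v /\ exists k n : nat, w = wpow n (rot k v)).

(* w is optimal: it belongs to the (unique, if existing) complete set *)
Definition optimal (A B : 'M[R]_2) (w : word) : Prop :=
  exists V, complete_optimal A B V /\ V w.
End Optimal.

From HB Require Import structures.
From mathcomp Require Import all_boot all_order all_algebra.
From mathcomp Require Import reals ring lra.
Set Implicit Arguments. Unset Strict Implicit. Unset Printing Implicit Defensive.
Import Order.TTheory GRing.Theory Num.Theory.
Local Open Scope ring_scope.

(* Conjugating by the affine map that sends i to the intersection point of the two axes makes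
   A and B symmetric without changing any trace [w].  A symmetric matrix of determinant 1 and
   trace t > 2 has Euclidean operator norm mu(t), the larger root of X^2 - t X + 1, and a matrix
   of determinant 1 and operator norm at most l has trace at most l + 1/l.  With mu = mu([b]) >=
   mu([a]), every word u of length n thus satisfies [u] <= mu^n + mu^-n = [b^n].  The inequality
   is strict when u contains a and [a] < [b], and when u contains ab or ba: equality would make a
   vector a common mu-eigenvector of two distinct symmetric matrices with the same trace.  Hence
   the maximal words are the powers of b, and also those of a when [a] = [b], and the only Lyndon
   words among them are b and a. *)

Section TwoByTwo.
Variable R : comNzRingType.
Implicit Types (M N : 'M[R]_2) (u v : 'cV[R]_2).

Lemma ord2P (i : 'I_2) : i = 0 \/ i = 1.
Proof. by case: i => [[|[|//]] ?]; [left | right]; apply: val_inj. Qed.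

Lemma sum2E (F : 'I_2 -> R) : \sum_(i < 2) F i = F 0 + F 1.
Proof. by rewrite !big_ord_recl big_ord0 addr0; congr (F _ + F _); apply: val_inj. Qed.

Lemma mx2P M N :
  M 0 0 = N 0 0 -> M 0 1 = N 0 1 -> M 1 0 = N 1 0 -> M 1 1 = N 1 1 -> M = N.
Proof.
by move=> *; apply/matrixP => i j; case: (ord2P i) => ->; case: (ord2P j) => ->.
Qed.

Lemma col2P u v : u 0 0 = v 0 0 -> u 1 0 = v 1 0 -> u = v.
Proof. by move=> *; apply/matrixP => i j; rewrite ord1; case: (ord2P i) => ->. Qed.

Lemma mulmx2E m n (M : 'M[R]_(m, 2)) (N : 'M[R]_(2, n)) i j :
  (M *m N) i j = M i 0 * N 0 j + M i 1 * N 1 j.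
Proof. by rewrite mxE sum2E. Qed.

Lemma tr2E M : \tr M = M 0 0 + M 1 1.
Proof. by rewrite /mxtrace sum2E. Qed.

Lemma det2E M : \det M = M 0 0 * M 1 1 - M 0 1 * M 1 0.
Proof.
rewrite (expand_det_row _ 0) sum2E /cofactor !det_mx11 !mxE /=.
have -> : lift (0 : 'I_2) 0 = 1 by apply: val_inj.
have -> : lift (1 : 'I_2) 0 = 0 by apply: val_inj.
by rewrite expr0 expr1 mul1r mulN1r mulrN.
Qed.

Lemma sym2P M : M^T = M <-> M 0 1 = M 1 0.
Proof.
split=> [symM | e]; first by rewrite -[in LHS]symM mxE.
by apply: mx2P; rewrite !mxE.
Qed.

Definition mx2 (a b c d : R) : 'M[R]_2 :=
  \matrix_(i, j) if i == 0 then (if j == 0 then a else b) else (if j == 0 then c else d).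

Definition col2 (x y : R) : 'cV[R]_2 := \col_i if i == 0 then x else y.

Lemma cayley_hamilton2 M : M *m M = \tr M *: M - (\det M)%:M.
Proof. apply: mx2P; rewrite !(mulmx2E, mxE) tr2E det2E /=; ring. Qed.

Lemma mxtrace_exp M (mu nu : R) : \det M = 1 -> mu * nu = 1 -> mu + nu = \tr M ->
  forall n, \tr (M ^+ n) = mu ^+ n + nu ^+ n.
Proof.
move=> detM mu_nu trM.
have rec n : \tr (M ^+ n.+2) = \tr M * \tr (M ^+ n.+1) - \tr (M ^+ n).
  rewrite exprS exprS mulrA -!mulmxE cayley_hamilton2 detM mulmxBl mul_scalar_mx.
  by rewrite -scalemxAl scale1r linearB /= mxtraceZ.
suff pair n : \tr (M ^+ n) = mu ^+ n + nu ^+ n /\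
              \tr (M ^+ n.+1) = mu ^+ n.+1 + nu ^+ n.+1 by move=> n; case: (pair n).
elim: n => [|n [IH1 IH2]]; first by rewrite mxtrace1 -trM.
split=> //; rewrite rec IH1 IH2 -trM.
have -> : mu ^+ n.+2 + nu ^+ n.+2 =
  (mu + nu) * (mu ^+ n.+1 + nu ^+ n.+1) - mu * nu * (mu ^+ n + nu ^+ n) by rewrite !exprS; ring.
by rewrite mu_nu mul1r.
Qed.

Lemma mxtrace_sqr_defect M k :
  (k + \det M) ^+ 2 - k * \tr M ^+ 2 = \det (k%:M - M^T *m M) + k * (M 0 1 - M 1 0) ^+ 2.
Proof. rewrite !det2E tr2E !(mulmx2E, mxE) /=; ring. Qed.

End TwoByTwo.

Section Conjugation.
Variables (R : comNzRingType) (n : nat) (P Q : 'M[R]_n).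
Hypothesis PQ : P *m Q = 1%:M.

Lemma conj_mul X Y : (Q *m X *m P) *m (Q *m Y *m P) = Q *m (X *m Y) *m P.
Proof. by rewrite -!mulmxA (mulmxA P Q) PQ mul1mx. Qed.

Lemma conj_inj : injective (fun X => Q *m X *m P).
Proof.
have K X : P *m (Q *m X *m P) *m Q = X by rewrite !mulmxA PQ mul1mx -mulmxA PQ mulmx1.
by move=> X Y /= eXY; rewrite -[X]K -[Y]K eXY.
Qed.

Lemma mxtrace_conj X : \tr (Q *m X *m P) = \tr X.
Proof. by rewrite mxtrace_mulC mulmxA PQ mul1mx. Qed.

Lemma det_conj X : \det (Q *m X *m P) = \det X.
Proof. by rewrite !det_mulmx mulrAC -det_mulmx mulmx1C // det1 mul1r. Qed.

End Conjugation.

Section OperatorNorm.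
Variable R : realFieldType.
Implicit Types (M N S : 'M[R]_2) (v : 'cV[R]_2) (x y l m : R).

Lemma col2_eq0 x y : (col2 x y == 0) = (x == 0) && (y == 0).
Proof.
apply/eqP/andP => [c0 | [/eqP-> /eqP->]].
  have := congr1 (fun v : 'cV[R]_2 => (v 0 0, v 1 0)) c0.
  by rewrite /= !mxE /= => -[-> ->]; rewrite eqxx.
by apply: col2P; rewrite !mxE.
Qed.

Lemma col2_formE S x y :
  ((col2 x y)^T *m S *m col2 x y) 0 0 = S 0 0 * x ^+ 2 + (S 0 1 + S 1 0) * x * y + S 1 1 * y ^+ 2.
Proof. rewrite !(mulmx2E, mxE) /=; ring. Qed.

Lemma psd2_det_ge0 S : S^T = S -> (forall v, 0 <= (v^T *m S *m v) 0 0) -> 0 <= \det S.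
Proof.
move=> /sym2P symS psd; rewrite det2E -symS.
set p := S 0 0; set q := S 0 1; set r := S 1 1.
have form x y : 0 <= p * x ^+ 2 + (q + q) * x * y + r * y ^+ 2.
  by have := psd (col2 x y); rewrite col2_formE -symS.
(* If det S < 0, the test vectors (q, -p) and (-r, q) force p = r = 0, then (1, 1) and (1, -1)
   force q = 0. *)
rewrite leNgt; apply/negP => D_lt0.
have p0 : p = 0 by have := form 1 0; have := form q (- p); nra.
have r0 : r = 0 by have := form 0 1; have := form (- r) q; nra.
by have := form 1 1; have := form 1 (-1); move: D_lt0; rewrite p0 r0; nra.
Qed.

Lemma pd2_det_gt0 S : S^T = S -> (forall v, v != 0 -> 0 < (v^T *m S *m v) 0 0) -> 0 < \det S.
Proof.
move=> /sym2P symS pd; rewrite det2E -symS.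
set p := S 0 0; set q := S 0 1; set r := S 1 1.
have form x y : (x != 0) || (y != 0) -> 0 < p * x ^+ 2 + (q + q) * x * y + r * y ^+ 2.
  by move=> xy0; have := pd (col2 x y); rewrite col2_eq0 negb_and xy0 col2_formE -symS => /(_ isT).
have p_gt0 : 0 < p by have := form 1 0; rewrite oner_eq0 /= => /(_ isT); lra.
by have := form q (- p); rewrite oppr_eq0 (gt_eqF p_gt0) orbT => /(_ isT); nra.
Qed.

Definition sqnorm v : R := (v^T *m v) 0 0.

Lemma sqnormE v : sqnorm v = v 0 0 ^+ 2 + v 1 0 ^+ 2.
Proof. by rewrite /sqnorm mulmx2E !mxE. Qed.

Lemma sqnorm_ge0 v : 0 <= sqnorm v.
Proof. by rewrite sqnormE addr_ge0 ?sqr_ge0. Qed.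

Lemma sqnorm_eq0 v : (sqnorm v == 0) = (v == 0).
Proof.
rewrite sqnormE paddr_eq0 ?sqr_ge0 // !sqrf_eq0.
apply/andP/eqP => [[/eqP v0 /eqP v1] | ->]; last by rewrite !mxE eqxx.
by apply: col2P; rewrite mxE.
Qed.

Lemma sqnorm_gt0 v : (0 < sqnorm v) = (v != 0).
Proof. by rewrite lt_neqAle sqnorm_ge0 andbT eq_sym sqnorm_eq0. Qed.

Lemma gram_formE M v k :
  (v^T *m (k%:M - M^T *m M) *m v) 0 0 = k * sqnorm v - sqnorm (M *m v).
Proof.
rewrite mulmxBr mulmxBl mul_mx_scalar -scalemxAl [LHS]mxE [X in X + _]mxE [X in _ + X]mxE.
by rewrite /sqnorm trmx_mul !mulmxA.
Qed.

Definition opnorm_le M l := forall v, sqnorm (M *m v) <= l ^+ 2 * sqnorm v.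
Definition opnorm_lt M l := forall v, v != 0 -> sqnorm (M *m v) < l ^+ 2 * sqnorm v.

Lemma opnorm_le1 : opnorm_le 1%:M 1.
Proof. by move=> v; rewrite mul1mx expr1n mul1r. Qed.

Lemma opnorm_le_mul M N l m : opnorm_le M l -> opnorm_le N m -> opnorm_le (M *m N) (l * m).
Proof.
move=> hM hN v; rewrite -mulmxA exprMn -mulrA.
by apply: le_trans (hM _) _; rewrite ler_wpM2l ?sqr_ge0.
Qed.

Lemma opnorm_lt_mull M N l m :
  N \in unitmx -> opnorm_lt M l -> opnorm_le N m -> opnorm_lt (M *m N) (l * m).
Proof.
move=> uN hM hN v v0; rewrite -mulmxA exprMn -mulrA.
have Nv0 : N *m v != 0 by apply: contraNneq v0 => Nv0; rewrite -(mulKmx uN v) Nv0 mulmx0.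
by apply: lt_le_trans (hM _ Nv0) _; rewrite ler_wpM2l ?sqr_ge0.
Qed.

Lemma opnorm_lt_mulr M N l m :
  0 < l -> opnorm_le M l -> opnorm_lt N m -> opnorm_lt (M *m N) (l * m).
Proof.
move=> l_gt0 hM hN v v0; rewrite -mulmxA exprMn -mulrA.
by apply: le_lt_trans (hM _) _; rewrite ltr_pM2l ?exprn_gt0 ?hN.
Qed.

Lemma opnorm_le_le M l m : 0 <= l <= m -> opnorm_le M l -> opnorm_le M m.
Proof.
move=> /andP[l_ge0 lm] hM v; apply: le_trans (hM v) _.
by rewrite ler_wpM2r ?sqnorm_ge0 //; nra.
Qed.

Lemma opnorm_le_lt M l m : 0 <= l < m -> opnorm_le M l -> opnorm_lt M m.
Proof.
move=> /andP[l_ge0 lm] hM v v0; apply: le_lt_trans (hM v) _.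
by rewrite ltr_pM2r ?sqnorm_gt0 //; nra.
Qed.

Lemma gram_sym M k : (k%:M - M^T *m M)^T = k%:M - M^T *m M.
Proof. by rewrite linearB /= tr_scalar_mx trmx_mul trmxK. Qed.

Lemma opnorm_le_tr M l : \det M = 1 -> 0 < l -> opnorm_le M l -> \tr M <= l + l^-1.
Proof.
move=> detM l_gt0 hM.
have gram_ge0 : 0 <= \det ((l ^+ 2)%:M - M^T *m M).
  by apply: psd2_det_ge0 (gram_sym _ _) _ => v; rewrite gram_formE subr_ge0.
have sq : (l * \tr M) ^+ 2 <= (l ^+ 2 + 1) ^+ 2.
  rewrite -subr_ge0 exprMn -[1 in X in X ^+ 2]detM mxtrace_sqr_defect.
  by apply: addr_ge0 gram_ge0 _; rewrite mulr_ge0 ?sqr_ge0.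
have tr_bound : l * \tr M <= l ^+ 2 + 1 by nra.
by rewrite -(ler_pM2l l_gt0) mulrDr mulfV ?gt_eqF // -expr2.
Qed.

Lemma opnorm_lt_tr M l : \det M = 1 -> 0 < l -> opnorm_lt M l -> \tr M < l + l^-1.
Proof.
move=> detM l_gt0 hM.
have gram_gt0 : 0 < \det ((l ^+ 2)%:M - M^T *m M).
  by apply: pd2_det_gt0 (gram_sym _ _) _ => v v0; rewrite gram_formE subr_gt0 hM.
have sq : (l * \tr M) ^+ 2 < (l ^+ 2 + 1) ^+ 2.
  rewrite -subr_gt0 exprMn -[1 in X in X ^+ 2]detM mxtrace_sqr_defect.
  by apply: ltr_wpDr gram_gt0; rewrite mulr_ge0 ?sqr_ge0.
have tr_bound : l * \tr M < l ^+ 2 + 1 by nra.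
by rewrite -(ltr_pM2l l_gt0) mulrDr mulfV ?gt_eqF // -expr2.
Qed.

Section Symmetric.
Variables (M : 'M[R]_2) (l : R).
Hypotheses (symM : M^T = M) (detM : \det M = 1) (l_gt1 : 1 < l) (trM : l + l^-1 = \tr M).

Let l_neq0 : l != 0. Proof. by rewrite lt0r_neq0 // (lt_trans ltr01). Qed.
Let l_subV_gt0 : 0 < l - l^-1.
Proof. by rewrite subr_gt0 (lt_trans _ l_gt1) // invf_lt1 // (lt_trans ltr01). Qed.
Let trM_gt0 : 0 < \tr M.
Proof. by rewrite -trM addr_gt0 ?invr_gt0 // (lt_trans ltr01). Qed.

Lemma sym_opnorm_defect v :
  (l - l^-1) * (l ^+ 2 * sqnorm v - sqnorm (M *m v)) = \tr M * sqnorm (l *: v - M *m v).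
Proof.
have root : l ^+ 2 - \tr M * l + 1 = 0 by rewrite -trM mulrDl mulVf //; ring.
have -> : l - l^-1 = 2 * l - \tr M by rewrite -trM; ring.
move: symM detM root; rewrite sym2P det2E tr2E => sym det root.
apply/eqP; rewrite -subr_eq0; apply/eqP.
transitivity (2 * l * ((l ^+ 2 - (M 0 0 + M 1 1) * l + 1) + (M 0 0 * M 1 1 - M 0 1 * M 1 0 - 1))
                   * sqnorm v); last by rewrite root det subrr addr0 mulr0 mul0r.
rewrite !sqnormE !(mulmx2E, mxE) sym; ring.
Qed.

Lemma sym_opnorm_le : opnorm_le M l.
Proof.
move=> v; rewrite -subr_ge0 -(pmulr_rge0 _ l_subV_gt0) sym_opnorm_defect.
exact: mulr_ge0 (ltW trM_gt0) (sqnorm_ge0 _).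
Qed.

Lemma sym_opnorm_eq v : sqnorm (M *m v) = l ^+ 2 * sqnorm v -> M *m v = l *: v.
Proof.
move=> eq_v; have := sym_opnorm_defect v; rewrite eq_v subrr mulr0 => /esym/eqP.
by rewrite mulf_eq0 gt_eqF //= sqnorm_eq0 subr_eq0 => /eqP.
Qed.

End Symmetric.

Lemma sym_traceless_det_eq0 (X : 'M[R]_2) : X^T = X -> \tr X = 0 -> \det X = 0 -> X = 0.
Proof.
move=> /sym2P symX; rewrite tr2E det2E -symX => trX detX.
have [x00 x01] : X 0 0 = 0 /\ X 0 1 = 0 by split; nra.
by apply: mx2P; rewrite !mxE -?symX; lra.
Qed.

(* Equality for some v would make v an l-eigenvector of both M and N, so that M - N, being
   symmetric and traceless, would be singular, hence zero. *)
Lemma sym_pair_opnorm_lt M N l :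
  M^T = M -> N^T = N -> \det M = 1 -> \det N = 1 -> 1 < l ->
  l + l^-1 = \tr M -> \tr N = \tr M -> M != N -> opnorm_lt (M *m N) (l * l).
Proof.
move=> symM symN detM detN l_gt1 trM trN MN v v0.
have trN' : l + l^-1 = \tr N by rewrite trN.
have l_gt0 : 0 < l by rewrite (lt_trans ltr01).
have l2_gt0 : 0 < l ^+ 2 by rewrite exprn_gt0.
have boundN := sym_opnorm_le symN detN l_gt1 trN' v.
have boundM := sym_opnorm_le symM detM l_gt1 trM (N *m v).
rewrite -mulmxA ltNge exprMn -mulrA; move: MN; apply: contra => ge.
have eqN : sqnorm (N *m v) = l ^+ 2 * sqnorm v.
  by apply/eqP; rewrite eq_le boundN -(ler_pM2l l2_gt0) (le_trans ge boundM).
have eqM : sqnorm (M *m (N *m v)) = l ^+ 2 * sqnorm (N *m v).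
  by apply/eqP; rewrite eq_le boundM eqN.
have Nv := sym_opnorm_eq symN detN l_gt1 trN' eqN.
have Mv : M *m v = l *: v.
  apply: (scalerI (lt0r_neq0 l_gt0)).
  by rewrite scalemxAr -Nv (sym_opnorm_eq symM detM l_gt1 trM eqM) Nv.
have symMN : (M - N)^T = M - N by rewrite linearB /= symM symN.
rewrite -subr_eq0; apply/eqP/sym_traceless_det_eq0 => //; first by rewrite linearB /= trN subrr.
apply/eqP/det0P; exists v^T; first by rewrite trmx_eq0.
by rewrite -[v^T *m _]trmxK trmx_mul trmxK symMN mulmxBl Mv Nv subrr trmx0.
Qed.

End OperatorNorm.

Section LargerRoot.
Variable R : rcfType.
Implicit Types t u : R.

Definition eigmax t : R := (t + Num.sqrt (t ^+ 2 - 4)) / 2.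

Lemma eigmax_gt1 t : 2 < t -> 1 < eigmax t.
Proof. by move=> t_gt2; rewrite /eigmax; have := sqrtr_ge0 (t ^+ 2 - 4); lra. Qed.

Lemma eigmax_addV t : 2 < t -> eigmax t + (eigmax t)^-1 = t.
Proof.
move=> t_gt2; have l_gt1 := eigmax_gt1 t_gt2.
have l_neq0 : eigmax t != 0 by rewrite lt0r_neq0 // (lt_trans ltr01).
apply: (mulfI l_neq0); rewrite mulrDr mulfV //.
rewrite /eigmax; set s := Num.sqrt _.
have s2 : s ^+ 2 = t ^+ 2 - 4 by rewrite sqr_sqrtr //; nra.
nra.
Qed.

Lemma eigmax_le t u : 2 < t -> t <= u -> eigmax t <= eigmax u.
Proof.
move=> t_gt2 tu; rewrite /eigmax ler_pM2r ?invr_gt0 ?ltr0n // lerD // ler_sqrt; nra.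
Qed.

Lemma eigmax_lt t u : 2 < t -> t < u -> eigmax t < eigmax u.
Proof.
move=> t_gt2 tu; rewrite /eigmax ltr_pM2r ?invr_gt0 ?ltr0n // ltr_leD // ler_sqrt; nra.
Qed.

End LargerRoot.

Section AxisThroughI.
Variable R : realType.
Implicit Types (M : 'M[R]_2) (p q : P1 R) (x y : R).

Definition fixes M p : Prop :=
  match p with
  | Some t => M 1 0 * t ^+ 2 + (M 1 1 - M 0 0) * t - M 0 1 = 0
  | None => M 1 0 = 0
  end.

Lemma eigenvector_fixes M (v : 'cV[R]_2) l : v != 0 -> M *m v = l *: v -> fixes M (point_of v).
Proof.
move=> v0 Mv; have := congr1 (fun w : 'cV[R]_2 => (w 0 0, w 1 0)) Mv.
rewrite /= !mulmx2E !mxE => -[e0 e1].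
rewrite /point_of (_ : ord_max = 1); last exact: val_inj.
have [v1_0 | v1_neq0] := eqVneq (v 1 0) 0; rewrite ?v1_0 ?eqxx ?v1_neq0 /=.
  have v0_neq0 : v 0 0 != 0 by apply: contraNneq v0 => v00; apply/eqP; apply: col2P; rewrite ?mxE.
  by move: e1; rewrite v1_0 !mulr0 addr0 => /eqP; rewrite mulf_eq0 (negbTE v0_neq0) orbF => /eqP.
set a := v 0 0; set b := v 1 0.
have -> : M 1 0 * (a / b) ^+ 2 + (M 1 1 - M 0 0) * (a / b) - M 0 1
          = (a * (M 1 0 * a + M 1 1 * b) - b * (M 0 0 * a + M 0 1 * b)) / b ^+ 2 by field.
by rewrite e0 e1 (_ : a * (l * b) - b * (l * a) = 0) ?mul0r //; ring.
Qed.

Lemma attracting_fixes M p : attracting M p -> fixes M p.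
Proof. by case=> v [l [v0 Mv _ ->]]; apply: eigenvector_fixes Mv. Qed.

Lemma repelling_fixes M p : repelling M p -> fixes M p.
Proof. by case=> v [l [v0 Mv _ ->]]; apply: eigenvector_fixes Mv. Qed.

(* z lies on the geodesic joining the two roots of c t^2 + (d - a) t - b, the axis of M. *)
Definition on_axis M (z : R * R) : Prop :=
  M 1 0 * (z.1 ^+ 2 + z.2 ^+ 2) + (M 1 1 - M 0 0) * z.1 - M 0 1 = 0.

Lemma geodesic_on_axis M p q z : fixes M p -> fixes M q -> geodesic p q z -> on_axis M z.
Proof.
case: z => x y; rewrite /on_axis /=.
case: p => [p|]; case: q => [q|] /= Fp Fq [//= y_gt0 circle]; first last.
- by move: Fq; rewrite Fp circle !mul0r !add0r.
- by move: Fp; rewrite Fq circle !mul0r !add0r.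
have G : (x - p) * (x - q) + y ^+ 2 = (x - (p + q) / 2) ^+ 2 + y ^+ 2 - ((p - q) / 2) ^+ 2.
  by field.
rewrite circle subrr in G.
have pq_neq0 : p - q != 0.
  apply/eqP => pq0; move: G; rewrite (_ : q = p) -?expr2; last by lra.
  by have := sqr_ge0 (x - p); have := exprn_gt0 2 y_gt0; lra.
have alpha0 : M 1 1 - M 0 0 + M 1 0 * (p + q) = 0.
  apply: (mulIf pq_neq0); rewrite mul0r.
  transitivity ((M 1 0 * p ^+ 2 + (M 1 1 - M 0 0) * p - M 0 1)
                - (M 1 0 * q ^+ 2 + (M 1 1 - M 0 0) * q - M 0 1)); first by ring.
  by rewrite Fp Fq subrr.
transitivity (M 1 0 * ((x - p) * (x - q) + y ^+ 2) + (M 1 1 - M 0 0 + M 1 0 * (p + q)) * (x - p)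
              + (M 1 0 * p ^+ 2 + (M 1 1 - M 0 0) * p - M 0 1)); first by ring.
by rewrite G alpha0 Fp mulr0 mul0r !addr0.
Qed.

(* The map w |-> y w + x, which sends i to x + i y. *)
Definition affine_mx x y : 'M[R]_2 := mx2 y x 0 1.
Definition affine_inv x y : 'M[R]_2 := mx2 y^-1 (- x / y) 0 1.

Lemma affine_mxK x y : y != 0 -> affine_mx x y *m affine_inv x y = 1%:M.
Proof. by move=> y0; apply: mx2P; rewrite !(mulmx2E, mxE) /=; field. Qed.

Lemma on_axis_conj_sym M x y : 0 < y -> on_axis M (x, y) ->
  (affine_inv x y *m M *m affine_mx x y)^T = affine_inv x y *m M *m affine_mx x y.
Proof.
move=> y_gt0 ax; apply/sym2P; apply/eqP; rewrite -subr_eq0; apply/eqP.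
rewrite !(mulmx2E, mxE) /=.
transitivity (- (M 1 0 * (x ^+ 2 + y ^+ 2) + (M 1 1 - M 0 0) * x - M 0 1) / y).
  by field; rewrite gt_eqF.
by rewrite ax oppr0 mul0r.
Qed.

End AxisThroughI.

Section Words.
Variable R : realType.
Implicit Types (A B : 'M[R]_2) (u : word) (l : R).

Lemma phi_cat A B u v : phi A B (u ++ v) = phi A B u *m phi A B v.
Proof. by elim: u => [|c u IH] /=; rewrite ?mul1mx // IH mulmxA. Qed.

Lemma phi_nseq A B n c : phi A B (nseq n c) = (if c then B else A) ^+ n.
Proof. by elim: n => [|n IH] //=; rewrite IH exprS mulmxE. Qed.

Lemma wtr_letter A B c : wtr A B [:: c] = \tr (if c then B else A).
Proof. by rewrite /wtr /= mulmx1. Qed.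

Lemma det_phi A B u : \det A = 1 -> \det B = 1 -> \det (phi A B u) = 1.
Proof.
move=> detA detB; elim: u => [|c u IH] /=; first exact: det1.
by rewrite det_mulmx IH mulr1; case: c.
Qed.

Lemma opnorm_le_phi A B l u :
  opnorm_le A l -> opnorm_le B l -> opnorm_le (phi A B u) (l ^+ size u).
Proof.
move=> hA hB; elim: u => [|c u IH] /=; first exact: opnorm_le1.
by rewrite exprS; apply: opnorm_le_mul IH; case: c.
Qed.

Lemma opnorm_lt_phi_infix A B l u1 s u2 : \det A = 1 -> \det B = 1 -> 0 < l ->
  opnorm_le A l -> opnorm_le B l -> opnorm_lt (phi A B s) (l ^+ size s) ->
  opnorm_lt (phi A B (u1 ++ s ++ u2)) (l ^+ size (u1 ++ s ++ u2)).
Proof.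
move=> detA detB l_gt0 hA hB hs; rewrite !phi_cat !size_cat !exprD.
apply: opnorm_lt_mulr; [exact: exprn_gt0 | exact: opnorm_le_phi |].
apply: opnorm_lt_mull hs (opnorm_le_phi _ hA hB).
by rewrite unitmxE det_phi ?unitr1.
Qed.

Lemma phi_conj A B (P Q : 'M[R]_2) u : Q *m P = 1%:M ->
  phi (Q *m A *m P) (Q *m B *m P) u = Q *m phi A B u *m P.
Proof.
move=> QP; elim: u => [|c u IH] /=; first by rewrite mulmx1.
by rewrite IH; case: c; rewrite (conj_mul (mulmx1C QP)).
Qed.

Lemma wtr_conj A B (P Q : 'M[R]_2) : P *m Q = 1%:M ->
  forall u, wtr (Q *m A *m P) (Q *m B *m P) u = wtr A B u.
Proof. by move=> PQ u; rewrite /wtr phi_conj ?(mulmx1C PQ) // mxtrace_conj. Qed.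

End Words.

Lemma size_wpow n (w : word) : size (wpow n w) = (n * size w)%N.
Proof. by rewrite /wpow size_flatten /shape map_nseq sumn_nseq mulnC. Qed.

Lemma wpow_nseq n k (c : bool) : wpow n (nseq k c) = nseq (n * k) c.
Proof. by elim: n => [|n IH] //; rewrite /wpow /= -/(wpow n _) IH mulSn nseqD. Qed.

Lemma wpow_letter n (c : bool) : wpow n [:: c] = nseq n c.
Proof. by have := wpow_nseq n 1 c; rewrite muln1. Qed.

Lemma wpow1 (w : word) : wpow 1 w = w.
Proof. exact: cats0. Qed.

Lemma nseq_of_notin (c : bool) (u : word) : c \notin u -> u = nseq (size u) (~~ c).
Proof.
move=> notin; apply/all_pred1P/allP => x xu /=.
by apply: contraR notin; case: x c xu => [] [] //= ->.
Qed.

Lemma flip_pair_infix (c : bool) (u : word) : c \in u -> ~~ c \in u ->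
  exists u1 u2 x, u = u1 ++ [:: x; ~~ x] ++ u2.
Proof.
elim: u => [|a [|b u] IH] //; first by rewrite !mem_seq1 => /eqP-> /eqP; case: a.
have [->|/negPf ab] := eqVneq b (~~ a); first by exists [::], u, a.
have ba : b = a by case: a b ab {IH} => [] [].
subst b.
have mem_aa y : (y \in a :: a :: u) = (y \in a :: u) by rewrite !in_cons orbA orbb.
rewrite !mem_aa => cu ncu; have [u1 [u2 [x ->]]] := IH cu ncu.
by exists (a :: u1), u2, x.
Qed.

Lemma lexlt_irr (w : word) : lexlt w w = false.
Proof. by elim: w => [|x w IH] //=; rewrite IH eqxx andbF orbF; case: x. Qed.

Lemma lyndon_letter (c : bool) : lyndon [:: c].
Proof. by split=> // -[|k]. Qed.

Lemma lyndon_nseq n (c : bool) : lyndon (nseq n c) -> n = 1%N.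
Proof.
case: n => [[]//|[|n]] // [_ minimal].
have rot1 : rot 1 (nseq n.+2 c) = nseq n.+2 c.
  by rewrite /rot drop_nseq take_nseq // -nseqD subn1 addn1.
by have := minimal 1%N; rewrite size_nseq rot1 lexlt_irr => /(_ isT).
Qed.

Lemma maximal_wtr_eq (R : realType) (A B A' B' : 'M[R]_2) w :
  (forall u, wtr A' B' u = wtr A B u) -> maximal A' B' w <-> maximal A B w.
Proof. by move=> E; split=> -[w0 H]; split=> // u /H; rewrite /wle !E. Qed.

Lemma optimal_of_maximal (R : realType) (A B : 'M[R]_2) (P : Prop) :
  (forall w, maximal A B w <->
     w != [::] /\ (w = nseq (size w) true \/ (P /\ w = nseq (size w) false))) ->
  forall w, optimal A B w <-> w = [:: true] \/ (P /\ w = [:: false]).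
Proof.
move=> maxP.
pose V w := w = [:: true] \/ (P /\ w = [:: false]).
have completeV : complete_optimal A B V.
  split=> [v [->|[p ->]] | w /maxP[w0 [ew|[p ew]]]].
  - by split; [apply/maxP; split=> //; left | exact: lyndon_letter].
  - by split; [apply/maxP; split=> //; right | exact: lyndon_letter].
  - by exists [:: true]; split; [left | exists 0%N, (size w); rewrite rot0 wpow_letter].
  - by exists [:: false]; split; [right | exists 0%N, (size w); rewrite rot0 wpow_letter].
move=> w; split=> [[U [[maxU _] Uw]] | Vw]; last by exists V.
have [/maxP[w0 ew] lyn_w] := maxU w Uw.
case: ew => [ew|[p ew]]; rewrite ew in lyn_w; rewrite ew (lyndon_nseq lyn_w); by [left | right].
Qed.

Section SymmetricPair.
Variables (R : realType) (A B : 'M[R]_2).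
Hypotheses (symA : A^T = A) (symB : B^T = B) (detA : \det A = 1) (detB : \det B = 1).
Hypotheses (trA_gt2 : 2 < \tr A) (trAB : \tr A <= \tr B) (AB_neq : A *m B != B *m A).

Let trB_gt2 : 2 < \tr B. Proof. exact: lt_le_trans trA_gt2 trAB. Qed.
Let lam := eigmax (\tr A).
Let mu := eigmax (\tr B).
Let lam_gt1 : 1 < lam. Proof. exact: eigmax_gt1. Qed.
Let mu_gt1 : 1 < mu. Proof. exact: eigmax_gt1. Qed.
Let mu_gt0 : 0 < mu. Proof. exact: lt_trans ltr01 mu_gt1. Qed.
Let mu_addV : mu + mu^-1 = \tr B. Proof. exact: eigmax_addV. Qed.

Let opnormA : opnorm_le A mu.
Proof.
apply: opnorm_le_le (sym_opnorm_le symA detA lam_gt1 (eigmax_addV trA_gt2)).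
by rewrite eigmax_le // andbT ltW // (lt_trans ltr01).
Qed.

Let opnormB : opnorm_le B mu. Proof. exact: sym_opnorm_le. Qed.

Lemma wtr_nseq_true n : wtr A B (nseq n true) = mu ^+ n + mu ^- n.
Proof.
by rewrite /wtr phi_nseq (mxtrace_exp detB (mulfV (lt0r_neq0 mu_gt0)) mu_addV) exprVn.
Qed.

Lemma wtr_nseq_false n : \tr A = \tr B -> wtr A B (nseq n false) = wtr A B (nseq n true).
Proof.
move=> trA; rewrite wtr_nseq_true /wtr phi_nseq.
by rewrite (mxtrace_exp detA (mulfV (lt0r_neq0 mu_gt0))) ?exprVn // trA.
Qed.

Lemma wtr_le_nseq_true u : wtr A B u <= wtr A B (nseq (size u) true).
Proof.
rewrite wtr_nseq_true; apply: opnorm_le_tr; rewrite ?det_phi ?exprn_gt0 //.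
exact: opnorm_le_phi.
Qed.

Lemma wtr_lt_nseq_true u :
  opnorm_lt (phi A B u) (mu ^+ size u) -> wtr A B u < wtr A B (nseq (size u) true).
Proof. by rewrite wtr_nseq_true; apply: opnorm_lt_tr; rewrite ?det_phi ?exprn_gt0. Qed.

Lemma wtr_eq_nseq_true u : wtr A B u = wtr A B (nseq (size u) true) ->
  u = nseq (size u) true \/ (\tr A = \tr B /\ u = nseq (size u) false).
Proof.
move=> eq_u.
have not_lt : ~ opnorm_lt (phi A B u) (mu ^+ size u).
  by move=> /wtr_lt_nseq_true; rewrite eq_u ltxx.
have [a_in|] := boolP (false \in u); last by move=> /nseq_of_notin u_b; left.
have trA : \tr A = \tr B.
  apply/eqP; rewrite eq_le trAB leNgt; apply/negP => trA_lt; apply: not_lt.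
  case/splitPr: a_in => u1 u2; apply: (opnorm_lt_phi_infix u1 (s := [:: false])) => //.
  rewrite /= mulmx1 expr1; apply: opnorm_le_lt (sym_opnorm_le symA detA lam_gt1 _).
    by rewrite eigmax_lt // ltW // (lt_trans ltr01).
  exact: eigmax_addV.
have [b_in|] := boolP (true \in u); last by move=> /nseq_of_notin u_a; right.
have A_neq_B : A != B by apply: contraNneq AB_neq => ->.
case: not_lt; have [u1 [u2 [x ->]]] := flip_pair_infix b_in a_in.
apply: opnorm_lt_phi_infix => //; rewrite /= mulmx1 expr2.
case: x => /=.
  by apply: sym_pair_opnorm_lt; rewrite // eq_sym.
by apply: sym_pair_opnorm_lt; rewrite // trA.
Qed.

Lemma maximal_sym_pair w : maximal A B w <->
  w != [::] /\ (w = nseq (size w) true \/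
                (wtr A B [:: false] = wtr A B [:: true] /\ w = nseq (size w) false)).
Proof.
rewrite !wtr_letter /=; split=> [[w0 maxw] | [w0 ew]]; split=> //.
  apply: wtr_eq_nseq_true; apply/eqP; rewrite eq_le wtr_le_nseq_true /=.
  by have := maxw [:: true] isT; rewrite /wle wpow_letter wpow1.
move=> u u0; rewrite /wle; apply: le_trans (wtr_le_nseq_true _) _.
rewrite size_wpow; case: ew => [ew | [trA ew]]; rewrite ew wpow_nseq size_nseq mulnC //.
by rewrite wtr_nseq_false.
Qed.

End SymmetricPair.

Theorem theorem3p4 (R : realType) (A B : 'M[R]_2) (ap am bp bm : option R) :
  \det A = 1 -> \det B = 1 ->
  A *m B != B *m A ->
  hyperbolic A -> hyperbolic B ->
  attracting A ap -> repelling A am ->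
  attracting B bp -> repelling B bm ->
  coherently_oriented A B ap am bp bm ->
  axes_intersect ap am bp bm ->
  wtr A B [:: false] <= wtr A B [:: true] ->
  forall w : word,
    optimal A B w <->
    (w = [:: true] \/ (wtr A B [:: false] = wtr A B [:: true] /\ w = [:: false])).
Proof.
move=> detA detB AB_neq trA_gt2 _ attrA repA attrB repB _ [[x y] [geoA geoB]] trAB.
have y_gt0 : 0 < y by case: geoA.
have axisA := geodesic_on_axis (attracting_fixes attrA) (repelling_fixes repA) geoA.
have axisB := geodesic_on_axis (attracting_fixes attrB) (repelling_fixes repB) geoB.
have PQ := affine_mxK x (lt0r_neq0 y_gt0).
apply: optimal_of_maximal => w; rewrite -(maximal_wtr_eq w (wtr_conj A B PQ)).
rewrite -!(wtr_conj A B PQ); apply: maximal_sym_pair; rewrite ?det_conj ?mxtrace_conj //.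
- exact: on_axis_conj_sym.
- exact: on_axis_conj_sym.
- by move: trAB; rewrite !wtr_letter.
- by rewrite !conj_mul // (inj_eq (conj_inj PQ)).
Qed.
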